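(* Let $G$ be a finite group and let $S,S'$ be two partial rainbows on $G$ with $\langle S\rangle=\langle S'\rangle$. Then for each arrow $(K,H)\in S$ there exists $g\in G$ such that $(gKg^{-1},gHg^{-1})\in S'$.
   Context: For a finite group $G$, an arrow is a pair $(K,H)$ of subgroups with $K\leqslant H$; it is an identity arrow if $K=H$. A $G$-transfer system is a set of arrows containing all identity arrows and closed under composition ($(A,B),(B,C)\Rightarrow(A,C)$), conjugation ($(A,B)\Rightarrow(gAg^{-1},gBg^{-1})$ for $g\in G$) and restriction ($(A,B)$ and $L\leqslant B\Rightarrow(A\cap L,L)$). For a set $S$ of non-identity arrows, $\langle S\rangle$ is the smallest transfer system containing $S$. For a subgroup $K$, $P(K)$ denotes the sum of the exponents in the prime factorization of $|K|$. A rainbow on $\mathbb{N}$ is a finite set of pairs $\{(a_i,b_i)\}_{0\leqslant i\leqslant k}$ of natural numbers such that $i<j$ implies $a_i<a_j<b_j<b_i$. A partial rainbow on $G$ is a set $S$ of non-identity arrows such that (1) the set $\{(P(K),P(H)) : (K,H)\in S\}$ is a rainbow, and (2) for any $g\in G$ and $(K,H)\in S$, if $(gKg^{-1},gHg^{-1})\neq(K,H)$ then $(gKg^{-1},gHg^{-1})\notin S$. *)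

From mathcomp Require Import all_boot all_fingroup.
Set Implicit Arguments.
Unset Strict Implicit.
Unset Printing Implicit Defensive.
Local Open Scope group_scope.

Section TransferSystems.
Variable gT : finGroupType.

Definition arrow := ({group gT} * {group gT})%type.

Definition is_arrow (G : {set gT}) (a : arrow) : bool :=
  (a.1 \subset a.2) && (a.2 \subset G).

(* (g K g^-1, g H g^-1); note that in MathComp  K :^ x = x^-1 K x. *)
Definition conj_arrow (a : arrow) (g : gT) : arrow :=
  ((a.1 :^ g^-1)%G, (a.2 :^ g^-1)%G).

Definition transfer_system (G : {group gT}) (T : {set arrow}) : bool :=
  [&& [forall a in T, is_arrow G a],
      [forall H : {group gT}, (H \subset G) ==> ((H, H) \in T)],
      [forall a in T, forall b in T, (a.2 == b.1) ==> ((a.1, b.2) \in T)],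
      [forall a in T, forall g in G, conj_arrow a g \in T] &
      [forall a in T, forall L : {group gT},
          (L \subset a.2) ==> (((a.1 :&: L)%G, L) \in T)]].

Definition gen_transfer (G : {group gT}) (S : {set arrow}) : {set arrow} :=
  [set a | [forall T : {set arrow},
             (transfer_system G T && (S \subset T)) ==> (a \in T)]].

Definition Pexp (K : {set gT}) : nat :=
  (\sum_(p <- primes #|K|) logn p #|K|)%N.

Definition rainbow_seq (r : seq (nat * nat)) : Prop :=
  forall i j, i < j -> j < size r ->
    [/\ (nth (0,0) r i).1 < (nth (0,0) r j).1,
        (nth (0,0) r j).1 < (nth (0,0) r j).2 &
        (nth (0,0) r j).2 < (nth (0,0) r i).2].

Definition rainbow (X : pred (nat * nat)) : Prop :=
  exists r : seq (nat * nat), rainbow_seq r /\ forall x, X x <-> x \in r.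

Definition partial_rainbow (G : {group gT}) (S : {set arrow}) : Prop :=
  [/\ (forall a, a \in S -> is_arrow G a /\ a.1 != a.2),
      rainbow (fun x => x \in [seq (Pexp (a : arrow).1, Pexp (a : arrow).2) | a : arrow <- enum S]) &
      (forall g a, g \in G -> a \in S ->
          conj_arrow a g != a -> conj_arrow a g \notin S)].

End TransferSystems.

From mathcomp Require Import all_boot all_fingroup.
Set Implicit Arguments.
Unset Strict Implicit.
Local Open Scope group_scope.

(* Say that an arrow a lies below b when a.1 <= b.1^g and a.2 <= b.2^g for some
   g in G.  The identities, together with the arrows of G lying below an arrow
   of S, form a transfer system; hence every non-identity arrow of <S> lies
   below an arrow of S.  So a in S lies below some b in S', which lies below
   some c in S.  P is monotone along inclusions of subgroups and strictly so
   along proper ones, so (P a.1, P a.2) <= (P c.1, P c.2) componentwise; two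
   members of a rainbow are comparable only if they are equal.  Thus
   P(a) = P(b), and the inclusions of a.1, a.2 into b.1^g, b.2^g are
   equalities. *)

Definition bigomega (n : nat) : nat := \sum_(p <- primes n) logn p n.

Lemma bigomega_iota n b : n < b -> bigomega n = \sum_(p <- iota 0 b) logn p n.
Proof.
move=> ltnb; rewrite /bigomega [RHS](bigID (mem (primes n))) /=.
rewrite [X in _ = _ + X]big1 ?addn0; last first.
  by move=> p p_n; apply/eqP; rewrite -leqn0 leqNgt logn_gt0.
rewrite -[RHS]big_filter; apply/perm_big/uniq_perm.
- exact: primes_uniq.
- by rewrite filter_uniq // iota_uniq.
move=> p; rewrite mem_filter mem_iota add0n /=.
case p_n: (p \in primes n) => //=; apply/esym.
move: p_n; rewrite mem_primes => /and3P[_ n_gt0 p_dv_n].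
exact: leq_ltn_trans (dvdn_leq n_gt0 p_dv_n) ltnb.
Qed.

Lemma bigomegaM m n : 0 < m -> 0 < n -> bigomega (m * n) = bigomega m + bigomega n.
Proof.
move=> m_gt0 n_gt0.
have ltm : m < (m * n).+1 by rewrite ltnS leq_pmulr.
have ltn : n < (m * n).+1 by rewrite ltnS leq_pmull.
rewrite (bigomega_iota (ltnSn _)) (bigomega_iota ltm) (bigomega_iota ltn).
by rewrite -big_split; apply: eq_bigr => p _; rewrite lognM.
Qed.

Lemma bigomega_gt0 n : (0 < bigomega n) = (1 < n).
Proof.
case: (ltnP 1 n) => [n_gt1 | n_le1]; last first.
  by rewrite /bigomega; case: n n_le1 => [|[|]] //; rewrite big_nil.
have pdiv_n : pdiv n \in primes n.
  by rewrite mem_primes pdiv_prime // (ltnW n_gt1) pdiv_dvd.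
rewrite /bigomega (bigD1_seq (pdiv n)) ?primes_uniq //=.
by rewrite -logn_gt0 in pdiv_n; apply: leq_trans pdiv_n (leq_addr _ _).
Qed.

Lemma dvdn_bigomega_leq m n : 0 < n -> m %| n -> bigomega m <= bigomega n.
Proof.
move=> n_gt0 /dvdnP[q def_n]; rewrite def_n.
have /andP[q_gt0 m_gt0] : (0 < q) && (0 < m) by rewrite -muln_gt0 -def_n.
by rewrite bigomegaM // leq_addl.
Qed.

Lemma dvdn_bigomega_eq m n : 0 < n -> m %| n -> bigomega m = bigomega n -> m = n.
Proof.
move=> n_gt0 /dvdnP[q def_n]; rewrite def_n.
have /andP[q_gt0 m_gt0] : (0 < q) && (0 < m) by rewrite -muln_gt0 -def_n.
rewrite bigomegaM // -{1}[bigomega m]add0n => /addIn/esym/eqP.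
rewrite -leqn0 leqNgt bigomega_gt0 -leqNgt.
by case: q {def_n} q_gt0 => [|[|]] // _ _; rewrite mul1n.
Qed.

Lemma rainbow_seq_incomparable r x y : rainbow_seq r -> x \in r -> y \in r ->
  x.1 <= y.1 -> x.2 <= y.2 -> x = y.
Proof.
move=> rb_r x_r y_r; rewrite -(nth_index (0, 0) x_r) -(nth_index (0, 0) y_r).
rewrite -index_mem in x_r; rewrite -index_mem in y_r.
case: (ltngtP (index x r) (index y r)) => [lt_xy | lt_yx | -> //].
- by have [_ _ lt2] := rb_r _ _ lt_xy y_r; rewrite [_ <= _.2]leqNgt lt2.
- by have [lt1 _ _] := rb_r _ _ lt_yx x_r; rewrite leqNgt lt1.
Qed.

Lemma rainbow_incomparable (X : pred (nat * nat)) x y : rainbow X -> X x -> X y ->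
  x.1 <= y.1 -> x.2 <= y.2 -> x = y.
Proof.
move=> [r [rb_r memX]] Xx Xy.
by apply: (rainbow_seq_incomparable rb_r) => //; apply/memX.
Qed.

Section Subgroups.
Variable gT : finGroupType.
Implicit Types (G H K : {group gT}) (S : {set arrow gT}).

Lemma PexpE (A : {set gT}) : Pexp A = bigomega #|A|.
Proof. by []. Qed.

Lemma PexpJ (A : {set gT}) g : Pexp (A :^ g) = Pexp A.
Proof. by rewrite !PexpE cardJg. Qed.

Lemma subset_Pexp_leq H K : H \subset K -> Pexp H <= Pexp K.
Proof. by move=> sHK; rewrite !PexpE dvdn_bigomega_leq ?cardSg. Qed.

Lemma subset_Pexp_eq H K : H \subset K -> Pexp H = Pexp K -> H :=: K.
Proof.
move=> sHK eq_Pexp; apply/eqP; rewrite eqEcard sHK /=.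
by rewrite (dvdn_bigomega_eq (cardG_gt0 K) (cardSg sHK) eq_Pexp).
Qed.

Definition below_conj G S (A B : {set gT}) : bool :=
  [exists b in S, exists g in G, (A \subset b.1 :^ g) && (B \subset b.2 :^ g)].

Lemma below_conjP G S (A B : {set gT}) :
  reflect (exists b, exists g, [/\ b \in S, g \in G, A \subset b.1 :^ g & B \subset b.2 :^ g])
          (below_conj G S A B).
Proof.
apply: (iffP existsP) => [[b /andP[bS /existsP[g /and3P[gG sA sB]]]] | [b [g [bS gG sA sB]]]].
  by exists b, g.
by exists b; rewrite bS; apply/existsP; exists g; rewrite gG sA sB.
Qed.

Lemma below_conjS G S (A A' B B' : {set gT}) :
  A' \subset A -> B' \subset B -> below_conj G S A B -> below_conj G S A' B'.
Proof.
move=> sA'A sB'B /below_conjP[b [g [bS gG sA sB]]]; apply/below_conjP.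
by exists b, g; split=> //; apply: subset_trans; eassumption.
Qed.

Lemma below_conjJ G S (A B : {set gT}) g : g \in G ->
  below_conj G S A B -> below_conj G S (A :^ g^-1) (B :^ g^-1).
Proof.
move=> gG /below_conjP[b [h [bS hG sA sB]]]; apply/below_conjP.
by exists b, (h * g^-1); rewrite groupM ?groupV // !conjsgM !conjSg.
Qed.

Definition below_closure G S : {set arrow gT} :=
  [set a | is_arrow G a && ((a.1 == a.2) || below_conj G S a.1 a.2)].

Lemma transfer_system_below_closure G S : transfer_system G (below_closure G S).
Proof.
apply/and5P; split; apply/forallP.
- by move=> a; apply/implyP; rewrite inE => /andP[].
- by move=> H; apply/implyP => sHG; rewrite inE /is_arrow /= subxx sHG eqxx.
- move=> a; apply/implyP; rewrite inE => /andP[/andP[sa12 _] below_a].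
  apply/forallP => b; apply/implyP; rewrite inE => /andP[/andP[sb12 sb2G] below_b].
  apply/implyP => /eqP eq_ab; rewrite inE /is_arrow /= sb2G andbT.
  rewrite eq_ab in sa12 below_a; rewrite (subset_trans sa12 sb12) /=.
  case/orP: below_b => [/eqP <- // | ]; rewrite orbC.
  by move/(below_conjS sa12 (subxx _)) ->.
- move=> a; apply/implyP; rewrite inE => /andP[/andP[sa12 sa2G] below_a].
  apply/forallP => g; apply/implyP => gG.
  rewrite inE /is_arrow /conj_arrow /= conjSg sa12 sub_conjg invgK (conjGid gG) sa2G /=.
  case/orP: below_a => [/eqP -> | /(below_conjJ gG) ->]; first by rewrite eqxx.
  by rewrite orbT.
- move=> a; apply/implyP; rewrite inE => /andP[/andP[_ sa2G] below_a].
  apply/forallP => L; apply/implyP => sLa2.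
  rewrite inE /is_arrow /= subsetIr (subset_trans sLa2 sa2G) /=.
  case/orP: below_a => [/eqP eq_a | ].
    by rewrite -val_eqE /= eq_a (setIidPr sLa2) eqxx.
  by move/(below_conjS (subsetIl a.1 L) sLa2) ->; rewrite orbT.
Qed.

Lemma sub_below_closure G S : {in S, forall a, is_arrow G a} -> S \subset below_closure G S.
Proof.
move=> arrS; apply/subsetP => a aS; rewrite inE arrS //=; apply/orP; right.
by apply/below_conjP; exists a, 1; rewrite group1 !conjsg1 !subxx.
Qed.

Lemma gen_transfer_min G S T :
  transfer_system G T -> S \subset T -> gen_transfer G S \subset T.
Proof.
move=> tsT sST; apply/subsetP => a; rewrite inE => /forallP/(_ T)/implyP; apply.
by rewrite tsT sST.
Qed.

Lemma sub_gen_transfer G S : S \subset gen_transfer G S.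
Proof.
apply/subsetP => a aS; rewrite inE; apply/forallP => T; apply/implyP.
by case/andP => _ /subsetP; apply.
Qed.

Lemma gen_transfer_below G S a : {in S, forall b, is_arrow G b} ->
  a \in gen_transfer G S -> a.1 != a.2 -> below_conj G S a.1 a.2.
Proof.
move=> arrS a_gen neq_a.
have := subsetP (gen_transfer_min (transfer_system_below_closure G S)
                                  (sub_below_closure arrS)) a a_gen.
by rewrite inE (negbTE neq_a) => /andP[].
Qed.

Lemma partial_rainbow_incomparable G S a c : partial_rainbow G S -> a \in S -> c \in S ->
  Pexp a.1 <= Pexp c.1 -> Pexp a.2 <= Pexp c.2 ->
  Pexp a.1 = Pexp c.1 /\ Pexp a.2 = Pexp c.2.
Proof.
case=> _ rbS _ aS cS le1 le2.
have memS b : b \in S -> (Pexp b.1, Pexp b.2) \in [seq (Pexp b.1, Pexp b.2) | b : arrow gT <- enum S].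
  by move=> bS; apply: map_f; rewrite mem_enum.
by case: (rainbow_incomparable rbS (memS a aS) (memS c cS) le1 le2).
Qed.

Lemma conj_arrow_eq (a b : arrow gT) g :
  (a.1 : {set gT}) = b.1 :^ g -> (a.2 : {set gT}) = b.2 :^ g -> conj_arrow a g = b.
Proof.
move=> eq1 eq2; rewrite /conj_arrow [b]surjective_pairing.
by congr (_, _); apply: val_inj; rewrite /= ?eq1 ?eq2 conjsgK.
Qed.

End Subgroups.

Unset Implicit Arguments.

Theorem proposition3p4 (gT : finGroupType) (G : {group gT})
    (S S' : {set arrow gT}) :
  partial_rainbow G S -> partial_rainbow G S' ->
  gen_transfer G S = gen_transfer G S' ->
  forall a, a \in S -> exists2 g, g \in G & conj_arrow a g \in S'.
Proof.
move=> prS prS' genSS' a aS; have [arrS _ _] := prS; have [arrS' _ _] := prS'.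
have a_gen : a \in gen_transfer G S' by rewrite -genSS' (subsetP (sub_gen_transfer _ _)).
have /below_conjP[b [g [bS' gG sab1 sab2]]] :=
  gen_transfer_below (fun b bS => (arrS' b bS).1) a_gen (arrS a aS).2.
have b_gen : b \in gen_transfer G S by rewrite genSS' (subsetP (sub_gen_transfer _ _)).
have /below_conjP[c [h [cS hG sbc1 sbc2]]] :=
  gen_transfer_below (fun b bS => (arrS b bS).1) b_gen (arrS' b bS').2.
have le_ab1 := subset_Pexp_leq sab1; have le_ab2 := subset_Pexp_leq sab2.
have le_bc1 := subset_Pexp_leq sbc1; have le_bc2 := subset_Pexp_leq sbc2.
rewrite !PexpJ in le_ab1 le_ab2 le_bc1 le_bc2.
have [eq_ac1 eq_ac2] := partial_rainbow_incomparable prS aS cS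
  (leq_trans le_ab1 le_bc1) (leq_trans le_ab2 le_bc2).
have eq_ab1 : Pexp a.1 = Pexp (b.1 :^ g)%G.
  by apply/eqP; rewrite PexpJ eqn_leq le_ab1 eq_ac1.
have eq_ab2 : Pexp a.2 = Pexp (b.2 :^ g)%G.
  by apply/eqP; rewrite PexpJ eqn_leq le_ab2 eq_ac2.
exists g => //; rewrite (conj_arrow_eq (subset_Pexp_eq sab1 eq_ab1)) //.
exact: subset_Pexp_eq sab2 eq_ab2.
Qed.
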